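(* For every nonnegative integer $r$, $$\sum_{n=1}^{\infty}\frac{n}{(2n+2r+3)(2n-1)^2(2n+1)(2n+3)}\frac{\binom{2n}{n}}{\binom{2n+2r+2}{n+r+1}}=\frac{1}{2^{2r+2}}\left(\frac{8\wp(2r+4)-8\wp(2r+2)+3\wp(2r)}{128}+\frac{6}{128(4+2r)}-\frac{3}{128(2+2r)}\right),$$ where $\wp(q)=\int_0^{\pi/2} z\sin^q z\,\mathrm{d}z$. *)

From Stdlib Require Import Reals.
From Coquelicot Require Import Coquelicot.
Open Scope R_scope.

Definition wp (q : nat) : R := RInt (fun z => z * (sin z) ^ q) 0 (PI / 2).

Definition summand (r n : nat) : R :=
  INR n /
    ((2 * INR n + 2 * INR r + 3) * (2 * INR n - 1) ^ 2 * (2 * INR n + 1) * (2 * INR n + 3))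
  * (Binomial.C (2 * n)%nat n / Binomial.C (2 * n + 2 * r + 2)%nat (n + r + 1)%nat).

(* Creative telescoping in r.  Writing s_r(n) for the summand, there are rational functions
   λ(r) and R(n, r) with R(1, r) = 0 such that
     s_{r+1}(n) - λ(r)/4 s_r(n) = (R(n+1, r) s_r(n+1) - R(n, r) s_r(n)) / 4,
   so the series for r + 1 is λ(r)/4 times the series for r plus (lim R(n, r) s_r(n)) / 4, a limit
   that is explicit because C(2n, n) / C(2n+2r+2, n+r+1) -> 4^-(r+1).  Integration by parts gives
   (q+2) ℘(q+2) = (q+1) ℘(q) + 1/(q+2), and with it the right-hand side satisfies the same
   recurrence.  For r = 0, partial fractions reduce the series to (1/256) Σ 1/(2k+1)^2 = π^2/2048;
   the value Σ 1/(2k+1)^2 = π^2/8 comes from Σ 1/n^2 = π^2/6, proved with Matsuoka's integrals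
   I_n = ∫ cos^2n x dx and J_n = ∫ x^2 cos^2n x dx over [0, π/2], which satisfy
   J_n/I_n - J_{n+1}/I_{n+1} = 1/(2(n+1)^2) and 0 <= J_n/I_n <= 9/(2n+2). *)

From Stdlib Require Import Reals Lra Lia.
From Coquelicot Require Import Coquelicot.
Open Scope R_scope.

Lemma is_RInt_lincomb (f g : R -> R) (a b u v al be : R) :
  is_RInt f a b u -> is_RInt g a b v ->
  is_RInt (fun x => al * f x + be * g x) a b (al * u + be * v).
Proof.
  intros Hf Hg.
  exact (is_RInt_plus _ _ _ _ _ _ (is_RInt_scal _ _ _ _ _ Hf) (is_RInt_scal _ _ _ _ _ Hg)).
Qed.

Lemma is_RInt_antiderivative_eq (F f : R -> R) (a b u : R) :
  is_RInt f a b u -> (forall x, is_derive F x (f x)) -> (forall x, continuous f x) ->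
  u = F b - F a.
Proof.
  intros Hf HF Hc.
  apply (filterlim_locally_unique _ _ _ Hf).
  apply (is_RInt_derive (V := R_CompleteNormedModule)); intros x _; [apply HF | apply Hc].
Qed.

Lemma is_RInt_of_ex_derive (f : R -> R) (a b : R) :
  (forall x, ex_derive f x) -> is_RInt f a b (RInt f a b).
Proof.
  intros Hf. apply (RInt_correct (V := R_CompleteNormedModule)), ex_RInt_continuous.
  intros x _. apply (ex_derive_continuous (K := R_AbsRing) (V := R_NormedModule)), Hf.
Qed.

Ltac solve_continuity :=
  intros; apply (ex_derive_continuous (K := R_AbsRing) (V := R_NormedModule)); auto_derive; auto.

Lemma cos_sq (x : R) : cos x ^ 2 = 1 - sin x ^ 2.
Proof. pose proof (sin2_cos2 x) as H. unfold Rsqr in H. lra. Qed.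

Lemma sin_sq (x : R) : sin x ^ 2 = 1 - cos x ^ 2.
Proof. rewrite cos_sq. ring. Qed.

Lemma is_RInt_wp (q : nat) : is_RInt (fun z => z * sin z ^ q) 0 (PI / 2) (wp q).
Proof. apply is_RInt_of_ex_derive; intros; auto_derive; auto. Qed.

Lemma wp_0 : wp 0 = PI ^ 2 / 8.
Proof.
  rewrite (is_RInt_antiderivative_eq (fun x => x ^ 2 / 2) _ _ _ _ (is_RInt_wp 0)).
  - field.
  - intros x. auto_derive; auto. field.
  - solve_continuity.
Qed.

Lemma wp_SS (q : nat) : INR (q + 2) * wp (q + 2) = INR (q + 1) * wp q + / INR (q + 2).
Proof.
  assert (Hq : INR (q + 2) <> 0) by (apply not_0_INR; lia).
  set (F := fun z => - z * cos z * sin z ^ (q + 1) + sin z ^ (q + 2) / INR (q + 2)).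
  assert (E : INR (q + 2) * wp (q + 2) + - INR (q + 1) * wp q = F (PI / 2) - F 0).
  { apply (is_RInt_antiderivative_eq F _ _ _ _
      (is_RInt_lincomb _ _ _ _ _ _ _ _ (is_RInt_wp (q + 2)) (is_RInt_wp q))).
    - intros z. unfold F. auto_derive; auto.
      rewrite !plus_INR in *. simpl INR in *.
      replace (Nat.pred (q + 1)) with q by lia. replace (Nat.pred (q + 2)) with (q + 1)%nat by lia.
      rewrite !pow_add. field_simplify; [| exact Hq]. rewrite cos_sq. ring.
    - solve_continuity. }
  assert (F (PI / 2) - F 0 = / INR (q + 2)).
  { unfold F. rewrite cos_PI2, sin_PI2, sin_0, !pow1, !pow_i by lia. field. exact Hq. }
  lra.
Qed.

Lemma wp_add2 (q : nat) : wp (q + 2) = (INR (q + 1) * wp q + / INR (q + 2)) / INR (q + 2).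
Proof.
  rewrite <- wp_SS. field. apply not_0_INR. lia.
Qed.

Definition int_cos_pow (n : nat) : R := RInt (fun x => cos x ^ (2 * n)) 0 (PI / 2).
Definition int_sq_cos_pow (n : nat) : R := RInt (fun x => x ^ 2 * cos x ^ (2 * n)) 0 (PI / 2).

Lemma is_RInt_int_cos_pow (n : nat) :
  is_RInt (fun x => cos x ^ (2 * n)) 0 (PI / 2) (int_cos_pow n).
Proof. apply is_RInt_of_ex_derive; intros; auto_derive; auto. Qed.

Lemma is_RInt_int_sq_cos_pow (n : nat) :
  is_RInt (fun x => x ^ 2 * cos x ^ (2 * n)) 0 (PI / 2) (int_sq_cos_pow n).
Proof. apply is_RInt_of_ex_derive; intros; auto_derive; auto. Qed.

Lemma int_cos_pow_0 : int_cos_pow 0 = PI / 2.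
Proof.
  rewrite (is_RInt_antiderivative_eq (fun x => x) _ _ _ _ (is_RInt_int_cos_pow 0)).
  - ring.
  - intros x. auto_derive; auto.
  - solve_continuity.
Qed.

Lemma int_sq_cos_pow_0 : int_sq_cos_pow 0 = PI ^ 3 / 24.
Proof.
  rewrite (is_RInt_antiderivative_eq (fun x => x ^ 3 / 3) _ _ _ _ (is_RInt_int_sq_cos_pow 0)).
  - field.
  - intros x. auto_derive; auto. simpl; field.
  - solve_continuity.
Qed.

Lemma int_cos_pow_S (n : nat) :
  int_cos_pow (S n) = INR (2 * n + 1) / INR (2 * n + 2) * int_cos_pow n.
Proof.
  assert (Hn : INR (2 * n + 2) <> 0) by (apply not_0_INR; lia).
  assert (E : INR (2 * n + 2) * int_cos_pow (S n) + - INR (2 * n + 1) * int_cos_pow n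
              = sin (PI / 2) * cos (PI / 2) ^ (2 * n + 1) - sin 0 * cos 0 ^ (2 * n + 1)).
  { apply (is_RInt_antiderivative_eq (fun x => sin x * cos x ^ (2 * n + 1)) _ _ _ _
      (is_RInt_lincomb _ _ _ _ _ _ _ _ (is_RInt_int_cos_pow (S n)) (is_RInt_int_cos_pow n))).
    - intros x. replace (2 * S n)%nat with (2 * n + 2)%nat by lia.
      set (m := (2 * n)%nat). auto_derive; auto.
      replace (Nat.pred (m + 1)) with m by lia.
      rewrite !plus_INR. simpl INR. rewrite !pow_add. ring_simplify. rewrite sin_sq. ring.
    - solve_continuity. }
  rewrite cos_PI2, sin_0, pow_i in E by lia.
  field_simplify_eq; [lra | exact Hn].
Qed.

Lemma int_sq_cos_pow_S (n : nat) :
  INR (S n) * INR (2 * n + 1) * int_sq_cos_pow n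
  = int_cos_pow (S n) + 2 * INR (S n) ^ 2 * int_sq_cos_pow (S n).
Proof.
  rewrite S_INR.
  set (F := fun x => x * cos x ^ (2 * n + 2) + (INR n + 1) * (x ^ 2 * sin x * cos x ^ (2 * n + 1))).
  assert (E : 1 * (1 * int_cos_pow (S n) + 2 * (INR n + 1) ^ 2 * int_sq_cos_pow (S n))
              + - ((INR n + 1) * INR (2 * n + 1)) * int_sq_cos_pow n = F (PI / 2) - F 0).
  { apply (is_RInt_antiderivative_eq F _ _ _ _
      (is_RInt_lincomb _ _ _ _ _ _ _ _
        (is_RInt_lincomb _ _ _ _ _ _ _ _ (is_RInt_int_cos_pow (S n)) (is_RInt_int_sq_cos_pow (S n)))
        (is_RInt_int_sq_cos_pow n))).
    - intros x. unfold F. replace (2 * S n)%nat with (2 * n + 2)%nat by lia.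
      assert (Hm : INR (2 * n) = 2 * INR n) by (rewrite mult_INR; reflexivity).
      set (m := (2 * n)%nat) in *. auto_derive; auto.
      replace (Nat.pred (m + 1)) with m by lia.
      replace (Nat.pred (m + 2)) with (m + 1)%nat by lia.
      rewrite !plus_INR, Hm, !pow_add. simpl INR. ring_simplify. rewrite sin_sq. ring.
    - solve_continuity. }
  assert (F (PI / 2) - F 0 = 0).
  { unfold F. rewrite cos_PI2, sin_0, !pow_i by lia. ring. }
  lra.
Qed.

Lemma int_cos_pow_gt0 (n : nat) : 0 < int_cos_pow n.
Proof.
  induction n as [|n IH].
  - rewrite int_cos_pow_0. pose proof PI_RGT_0. lra.
  - rewrite int_cos_pow_S. apply Rmult_lt_0_compat; [|exact IH].
    apply Rdiv_lt_0_compat; apply lt_0_INR; lia.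
Qed.

Lemma le_3_sin (x : R) : 0 <= x <= PI / 2 -> x <= 3 * sin x.
Proof.
  intros Hx. pose proof PI_4.
  destruct (sin_bound x 0 ltac:(lra) ltac:(lra)) as [Hsin _].
  unfold sin_approx, sin_term in Hsin. simpl in Hsin. nra.
Qed.

Lemma int_sq_cos_pow_bounds (n : nat) :
  0 <= int_sq_cos_pow n <= 9 * int_cos_pow n / (2 * INR n + 2).
Proof.
  assert (HPI := PI_RGT_0).
  assert (Hcos : forall x, 0 <= cos x ^ (2 * n)) by (intros; rewrite pow_mult; apply pow_le, pow2_ge_0).
  split.
  - apply (is_RInt_ge_0 _ 0 (PI / 2) _ ltac:(lra) (is_RInt_int_sq_cos_pow n)).
    intros x _. apply Rmult_le_pos; [apply pow2_ge_0 | apply Hcos].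
  - replace (9 * int_cos_pow n / (2 * INR n + 2)) with (9 * int_cos_pow n + -9 * int_cos_pow (S n)).
    2: { rewrite int_cos_pow_S, !plus_INR, mult_INR. simpl INR. field. pose proof (pos_INR n). lra. }
    apply (is_RInt_le (fun x => x ^ 2 * cos x ^ (2 * n))
      (fun x => 9 * cos x ^ (2 * n) + -9 * cos x ^ (2 * S n)) 0 (PI / 2));
      [lra | apply is_RInt_int_sq_cos_pow | |].
    + apply is_RInt_lincomb; apply is_RInt_int_cos_pow.
    + intros x Hx. replace (2 * S n)%nat with (2 * n + 2)%nat by lia.
      rewrite pow_add, cos_sq.
      pose proof (le_3_sin x ltac:(lra)). pose proof (Hcos x).
      assert (x ^ 2 <= 9 * sin x ^ 2) by nra. nra.
Qed.

Lemma is_lim_seq_affine_ratio (al be ga de : R) : 0 < ga -> 0 < de ->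
  is_lim_seq (fun m => (al * INR m + be) / (ga * INR m + de)) (al / ga).
Proof.
  intros Hga Hde.
  assert (Hinv : is_lim_seq (fun m => / (ga * INR m + de)) 0).
  { apply (is_lim_seq_inv _ p_infty); [| discriminate].
    apply (is_lim_seq_plus _ _ p_infty de); [| apply is_lim_seq_const | reflexivity].
    apply (is_lim_seq_mult _ _ ga p_infty); [apply is_lim_seq_const | apply is_lim_seq_INR |].
    apply is_Rbar_mult_sym, is_Rbar_mult_p_infty_pos. exact Hga. }
  apply (is_lim_seq_ext (fun m => al / ga + (be - al * de / ga) * / (ga * INR m + de))).
  - intros m. pose proof (pos_INR m). field. split; nra.
  - pose proof (is_lim_seq_plus' _ _ _ _ (is_lim_seq_const (al / ga))
      (is_lim_seq_scal_l _ (be - al * de / ga) _ Hinv)) as L.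
    simpl in L. rewrite Rmult_0_r, Rplus_0_r in L. exact L.
Qed.

Fixpoint inv_sq_sum (n : nat) : R :=
  match n with
  | O => 0
  | S m => inv_sq_sum m + / INR (S m) ^ 2
  end.

Lemma sq_cos_pow_ratio_S (n : nat) :
  int_sq_cos_pow (S n) / int_cos_pow (S n)
  = int_sq_cos_pow n / int_cos_pow n - / (2 * INR (S n) ^ 2).
Proof.
  assert (HSn : INR (S n) <> 0) by (apply not_0_INR; lia).
  replace (int_sq_cos_pow (S n)) with
    ((INR (S n) * INR (2 * n + 1) * int_sq_cos_pow n - int_cos_pow (S n)) / (2 * INR (S n) ^ 2))
    by (rewrite int_sq_cos_pow_S; field; exact HSn).
  pose proof (int_cos_pow_gt0 n). pose proof (pos_INR n).
  rewrite int_cos_pow_S, !S_INR, !plus_INR, mult_INR in *. simpl INR.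
  field. repeat split; lra.
Qed.

Lemma inv_sq_sum_eq (n : nat) :
  inv_sq_sum n = PI ^ 2 / 6 - 2 * (int_sq_cos_pow n / int_cos_pow n).
Proof.
  induction n as [|n IH].
  - simpl. rewrite int_cos_pow_0, int_sq_cos_pow_0. field. pose proof PI_RGT_0. lra.
  - change (inv_sq_sum (S n)) with (inv_sq_sum n + / INR (S n) ^ 2).
    rewrite IH, sq_cos_pow_ratio_S. pose proof (int_cos_pow_gt0 n).
    field. split; [apply not_0_INR; lia | lra].
Qed.

Lemma is_lim_seq_inv_sq_sum : is_lim_seq inv_sq_sum (PI ^ 2 / 6).
Proof.
  assert (Hratio : is_lim_seq (fun n => int_sq_cos_pow n / int_cos_pow n) 0).
  { apply (is_lim_seq_le_le (fun _ => 0) _ (fun n => (0 * INR n + 9) / (2 * INR n + 2))).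
    - intros n. pose proof (int_cos_pow_gt0 n). pose proof (pos_INR n).
      destruct (int_sq_cos_pow_bounds n) as [Hlo Hhi].
      split; [apply Rdiv_le_0_compat; lra |].
      apply Rle_div_l; [lra |]. replace ((0 * INR n + 9) / (2 * INR n + 2) * int_cos_pow n)
        with (9 * int_cos_pow n / (2 * INR n + 2)) by (field; lra). exact Hhi.
    - apply is_lim_seq_const.
    - replace (Finite 0) with (Finite (0 / 2)) by (f_equal; field).
      apply is_lim_seq_affine_ratio; lra. }
  assert (L := is_lim_seq_minus' _ _ _ _ (is_lim_seq_const (PI ^ 2 / 6))
                 (is_lim_seq_scal_l _ 2 _ Hratio)).
  simpl in L. rewrite Rmult_0_r, Rminus_0_r in L.
  revert L. apply is_lim_seq_ext. intros n. symmetry. apply inv_sq_sum_eq.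
Qed.

(* [@eq R]: stated at the carrier of [R_AbelianMonoid] the equation would be out of reach of
   [field]. *)
Lemma sum_n_odd_inv_sq (n : nat) :
  @eq R (sum_n (fun k => / (2 * INR k + 1) ^ 2) n) (inv_sq_sum (2 * n + 2) - inv_sq_sum (n + 1) / 4).
Proof.
  induction n as [|n IH].
  - rewrite sum_O. simpl. field.
  - rewrite sum_Sn, IH.
    replace (2 * S n + 2)%nat with (S (S (2 * n + 2))) by lia.
    replace (S n + 1)%nat with (S (n + 1)) by lia.
    cbn [inv_sq_sum]. rewrite !S_INR, !plus_INR, mult_INR. simpl INR.
    change plus with Rplus. field. pose proof (pos_INR n). lra.
Qed.

Lemma is_series_odd_inv_sq : is_series (fun k => / (2 * INR k + 1) ^ 2) (PI ^ 2 / 8).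
Proof.
  assert (Heven : is_lim_seq (fun n => inv_sq_sum (2 * n + 2)) (PI ^ 2 / 6)).
  { apply (is_lim_seq_subseq inv_sq_sum); [| exact is_lim_seq_inv_sq_sum].
    intros P [N HN]. exists N. intros n Hn. apply HN. lia. }
  assert (Hshift : is_lim_seq (fun n => inv_sq_sum (n + 1)) (PI ^ 2 / 6))
    by exact (proj1 (is_lim_seq_incr_n _ 1 _) is_lim_seq_inv_sq_sum).
  assert (L := is_lim_seq_minus' _ _ _ _ Heven (is_lim_seq_mult' _ _ _ _ Hshift (is_lim_seq_const (/ 4)))).
  replace (PI ^ 2 / 8) with (PI ^ 2 / 6 - PI ^ 2 / 6 * / 4) by field.
  revert L. apply is_lim_seq_ext. intros n. rewrite sum_n_odd_inv_sq. reflexivity.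
Qed.

Definition central_binom (k : nat) : R := Binomial.C (2 * k) k.

Lemma central_binom_gt0 (k : nat) : 0 < central_binom k.
Proof.
  unfold central_binom, Binomial.C. replace (2 * k - k)%nat with k by lia.
  apply Rdiv_lt_0_compat; [| apply Rmult_lt_0_compat]; apply lt_0_INR, Factorial.lt_O_fact.
Qed.

Lemma central_binom_S (k : nat) :
  central_binom (S k) = central_binom k * (2 * (2 * INR k + 1) / (INR k + 1)).
Proof.
  unfold central_binom, Binomial.C.
  replace (2 * k - k)%nat with k by lia. replace (2 * S k - S k)%nat with (S k) by lia.
  replace (2 * S k)%nat with (S (S (2 * k))) by lia.
  rewrite !fact_simpl, !mult_INR, !S_INR, mult_INR.
  pose proof (lt_0_INR _ (Factorial.lt_O_fact (2 * k))).
  pose proof (lt_0_INR _ (Factorial.lt_O_fact k)). pose proof (pos_INR k).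
  simpl INR. field. repeat split; lra.
Qed.

Definition binom_ratio (r n : nat) : R := central_binom n / central_binom (n + r + 1).

Lemma binom_ratio_Sr (r n : nat) :
  binom_ratio (S r) n
  = binom_ratio r n * ((INR n + INR r + 2) / (2 * (2 * INR n + 2 * INR r + 3))).
Proof.
  unfold binom_ratio. replace (n + S r + 1)%nat with (S (n + r + 1)) by lia.
  rewrite central_binom_S, !plus_INR.
  pose proof (central_binom_gt0 (n + r + 1)). pose proof (central_binom_gt0 n).
  pose proof (pos_INR n). pose proof (pos_INR r).
  simpl INR. field. repeat split; lra.
Qed.

Lemma binom_ratio_Sn (r n : nat) :
  binom_ratio r (S n)
  = binom_ratio r n * (2 * (2 * INR n + 1) / (INR n + 1))
    * ((INR n + INR r + 2) / (2 * (2 * INR n + 2 * INR r + 3))).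
Proof.
  unfold binom_ratio. replace (S n + r + 1)%nat with (S (n + r + 1)) by lia.
  rewrite !central_binom_S, !plus_INR.
  pose proof (central_binom_gt0 (n + r + 1)). pose proof (central_binom_gt0 n).
  pose proof (pos_INR n). pose proof (pos_INR r).
  simpl INR. field. repeat split; lra.
Qed.

Lemma is_lim_seq_binom_ratio (r : nat) : is_lim_seq (binom_ratio r) (/ 2 ^ (2 * r + 2)).
Proof.
  induction r as [|r IH].
  - apply (is_lim_seq_ext (fun m => (1 * INR m + 1) / (4 * INR m + 2))).
    + intros m. unfold binom_ratio. replace (m + 0 + 1)%nat with (S m) by lia.
      rewrite central_binom_S. pose proof (central_binom_gt0 m). pose proof (pos_INR m).
      field. repeat split; lra.
    + replace (/ 2 ^ (2 * 0 + 2)) with (1 / 4) by (simpl; field).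
      apply is_lim_seq_affine_ratio; lra.
  - pose proof (pos_INR r).
    apply (is_lim_seq_ext (fun m => binom_ratio r m * ((1 * INR m + (INR r + 2)) / (4 * INR m + (4 * INR r + 6))))).
    + intros m. rewrite binom_ratio_Sr. f_equal. pose proof (pos_INR m). field. lra.
    + replace (/ 2 ^ (2 * S r + 2)) with (/ 2 ^ (2 * r + 2) * (1 / 4)).
      2: { replace (2 * S r + 2)%nat with (2 * r + 2 + 2)%nat by lia.
           rewrite (pow_add 2 (2 * r + 2) 2). simpl (2 ^ 2). field. apply pow_nonzero. lra. }
      apply is_lim_seq_mult'; [exact IH | apply is_lim_seq_affine_ratio; lra].
Qed.

Definition summand_denom (x y : R) : R :=
  (2 * x + 2 * y + 3) * (2 * x - 1) ^ 2 * (2 * x + 1) * (2 * x + 3).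

Lemma summand_eq (r n : nat) :
  summand r n = INR n / summand_denom (INR n) (INR r) * binom_ratio r n.
Proof.
  unfold summand, summand_denom, binom_ratio, central_binom.
  replace (2 * n + 2 * r + 2)%nat with (2 * (n + r + 1))%nat by lia. reflexivity.
Qed.

(* Zeilberger-style certificate for the recurrence in r; the factor (x - 1) of [tel_cert] kills
   the boundary term at n = 1. *)
Definition tel_quad (y : R) : R := 3 * y ^ 2 + 5 * y + 4.

Definition tel_factor (y : R) : R := tel_quad (y + 1) * (2 * y + 1) / (2 * (y + 3) * tel_quad y).

Definition tel_cert (x y : R) : R :=
  (x - 1) * (2 * x + 3) * (8 * x ^ 2 + 4 * (y + 3) * x + 4 - y - y ^ 2)
  / (2 * (y + 3) ^ 2 * tel_quad y).

Lemma tel_quad_gt0 (y : R) : 0 <= y -> 0 < tel_quad y.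
Proof. intros. unfold tel_quad. nra. Qed.

Lemma summand_telescoping (r n : nat) : (1 <= n)%nat ->
  summand (S r) n - tel_factor (INR r) / 4 * summand r n
  = / 4 * (tel_cert (INR (S n)) (INR r) * summand r (S n) - tel_cert (INR n) (INR r) * summand r n).
Proof.
  intros Hn. rewrite !summand_eq, binom_ratio_Sr, binom_ratio_Sn, !S_INR.
  apply (le_INR 1) in Hn. simpl in Hn. pose proof (pos_INR r).
  pose proof (tel_quad_gt0 (INR r) ltac:(lra)). pose proof (tel_quad_gt0 (INR r + 1) ltac:(lra)).
  unfold tel_factor, tel_cert, summand_denom, tel_quad in *.
  field. repeat split; nra.
Qed.

Lemma sum_n_summand_S (r M : nat) :
  sum_n (fun k => summand (S r) (S k)) M
  = tel_factor (INR r) / 4 * sum_n (fun k => summand r (S k)) M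
    + / 4 * (tel_cert (INR (M + 2)) (INR r) * summand r (M + 2)).
Proof.
  assert (Hcert1 : tel_cert (INR 1) (INR r) = 0) by (unfold tel_cert; simpl; unfold Rdiv; ring).
  induction M as [|M IH].
  - rewrite !sum_O. pose proof (summand_telescoping r 1 (le_n 1)) as T.
    rewrite Hcert1 in T. simpl (0 + 2)%nat. lra.
  - rewrite !sum_Sn, IH. pose proof (summand_telescoping r (S (S M)) ltac:(lia)) as T.
    replace (S M + 2)%nat with (S (S (S M))) by lia. replace (M + 2)%nat with (S (S M)) by lia.
    change plus with Rplus. lra.
Qed.

Definition boundary_limit (r : nat) : R :=
  / (4 * (INR r + 3) ^ 2 * tel_quad (INR r)) * / 2 ^ (2 * r + 2).

Lemma is_lim_seq_boundary (r : nat) :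
  is_lim_seq (fun m => tel_cert (INR (m + 2)) (INR r) * summand r (m + 2)) (boundary_limit r).
Proof.
  set (y := INR r). assert (Hy : 0 <= y) by apply pos_INR.
  assert (HP := tel_quad_gt0 y Hy).
  set (K := / (2 * (y + 3) ^ 2 * tel_quad y)).
  set (c := 4 - y - y ^ 2).
  (* With X = m + 2 the term is K (X-1)/(2X-1) X/(2X-1) Q(X) binom_ratio r X, where
     Q(X) = 2 + ((-4y-4) X + c-4y-6) / ((2X+2y+3)(2X+1)). *)
  assert (L1 := is_lim_seq_affine_ratio 1 1 2 3 ltac:(lra) ltac:(lra)).
  assert (L2 := is_lim_seq_affine_ratio 1 2 2 3 ltac:(lra) ltac:(lra)).
  assert (L3 := is_lim_seq_affine_ratio (- 4 * y - 4) (c - 12 * y - 14) 2 (2 * y + 7) ltac:(lra) ltac:(lra)).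
  assert (L4 := is_lim_seq_affine_ratio 0 1 2 5 ltac:(lra) ltac:(lra)).
  assert (Lg := proj1 (is_lim_seq_incr_n _ 2 _) (is_lim_seq_binom_ratio r)).
  assert (L := is_lim_seq_mult' _ _ _ _ (is_lim_seq_mult' _ _ _ _ (is_lim_seq_mult' _ _ _ _
     (is_lim_seq_mult' _ _ _ _ (is_lim_seq_const K) L1) L2)
     (is_lim_seq_plus' _ _ _ _ (is_lim_seq_const 2) (is_lim_seq_mult' _ _ _ _ L3 L4))) Lg).
  replace (boundary_limit r) with
    (K * (1 / 2) * (1 / 2) * (2 + (- 4 * y - 4) / 2 * (0 / 2)) * / 2 ^ (2 * r + 2)).
  2: { unfold boundary_limit, K. fold y. field. split; [apply pow_nonzero |]; lra. }
  revert L. apply is_lim_seq_ext. intros m.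
  rewrite summand_eq. unfold tel_cert, summand_denom, K, c. fold y.
  pose proof (pos_INR m). rewrite plus_INR. simpl INR.
  field. repeat split; try lra; nra.
Qed.

Lemma is_series_summand_S (r : nat) (T : R) :
  is_series (fun k => summand r (S k)) T ->
  is_series (fun k => summand (S r) (S k)) (tel_factor (INR r) / 4 * T + / 4 * boundary_limit r).
Proof.
  intros HT.
  assert (L := is_lim_seq_plus' _ _ _ _ (is_lim_seq_scal_l _ (tel_factor (INR r) / 4) T HT)
                 (is_lim_seq_scal_l _ (/ 4) _ (is_lim_seq_boundary r))).
  revert L. apply is_lim_seq_ext. intros M. symmetry. apply sum_n_summand_S.
Qed.

(* Partial fractions make 4 s_0(k+1) - 1/(64 (2k+1)^2) telescope; [base_remainder M] is its
   sum over k <= M. *)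
Definition base_remainder (m : R) : R :=
  / 2 * (3 / 64 * (/ (2 * m + 3) ^ 2 + / (2 * m + 5) ^ 2) - / 16 * / (2 * m + 3) ^ 2
         + / 128 * (/ (2 * m + 3) + / (2 * m + 5))).

Lemma sum_n_summand_0 (M : nat) :
  @eq R (sum_n (fun k => summand 0 (S k)) M)
    ((sum_n (fun k => / (2 * INR k + 1) ^ 2) M / 64 + base_remainder (INR M)) / 4).
Proof.
  assert (Hs : forall n, summand 0 n
            = INR n / summand_denom (INR n) 0 * ((INR n + 1) / (2 * (2 * INR n + 1)))).
  { intros n. rewrite summand_eq. unfold binom_ratio. replace (n + 0 + 1)%nat with (S n) by lia.
    rewrite central_binom_S. pose proof (central_binom_gt0 n). pose proof (pos_INR n).
    simpl INR. f_equal. field. lra. }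
  induction M as [|M IH].
  - rewrite !sum_O, Hs. unfold base_remainder, summand_denom. simpl. field.
  - rewrite !sum_Sn, IH, Hs. change plus with Rplus.
    unfold base_remainder, summand_denom. rewrite !S_INR. pose proof (pos_INR M).
    field. repeat split; lra.
Qed.

Lemma is_lim_seq_base_remainder : is_lim_seq (fun m => base_remainder (INR m)) 0.
Proof.
  assert (L3 := is_lim_seq_affine_ratio 0 1 2 3 ltac:(lra) ltac:(lra)).
  assert (L5 := is_lim_seq_affine_ratio 0 1 2 5 ltac:(lra) ltac:(lra)).
  assert (L := is_lim_seq_scal_l _ (/ 2) _
    (is_lim_seq_plus' _ _ _ _
      (is_lim_seq_minus' _ _ _ _
        (is_lim_seq_scal_l _ (3 / 64) _
           (is_lim_seq_plus' _ _ _ _ (is_lim_seq_mult' _ _ _ _ L3 L3) (is_lim_seq_mult' _ _ _ _ L5 L5)))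
        (is_lim_seq_scal_l _ (/ 16) _ (is_lim_seq_mult' _ _ _ _ L3 L3)))
      (is_lim_seq_scal_l _ (/ 128) _ (is_lim_seq_plus' _ _ _ _ L3 L5)))).
  replace (Finite 0) with (Rbar_mult (/ 2) (3 / 64 * (0 / 2 * (0 / 2) + 0 / 2 * (0 / 2))
    - / 16 * (0 / 2 * (0 / 2)) + / 128 * (0 / 2 + 0 / 2))) by (simpl; f_equal; field).
  revert L. apply is_lim_seq_ext. intros m. unfold base_remainder. pose proof (pos_INR m).
  field. split; lra.
Qed.

Lemma is_series_summand_0 : is_series (fun k => summand 0 (S k)) (PI ^ 2 / 2048).
Proof.
  assert (Hodd : is_lim_seq (sum_n (fun k => / (2 * INR k + 1) ^ 2)) (PI ^ 2 / 8))
    by exact is_series_odd_inv_sq.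
  assert (L := is_lim_seq_mult' _ _ _ _ (is_lim_seq_plus' _ _ _ _
    (is_lim_seq_mult' _ _ _ _ Hodd (is_lim_seq_const (/ 64))) is_lim_seq_base_remainder)
    (is_lim_seq_const (/ 4))).
  replace (PI ^ 2 / 2048) with ((PI ^ 2 / 8 * / 64 + 0) * / 4) by field.
  revert L. apply is_lim_seq_ext. intros M. rewrite sum_n_summand_0. reflexivity.
Qed.

Definition closed_form (r : nat) : R :=
  / 2 ^ (2 * r + 2)%nat *
    ((8 * wp (2 * r + 4)%nat - 8 * wp (2 * r + 2)%nat + 3 * wp (2 * r)%nat) / 128
     + 6 / (128 * (4 + 2 * INR r)) - 3 / (128 * (2 + 2 * INR r))).

Lemma closed_form_0 : closed_form 0 = PI ^ 2 / 2048.
Proof.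
  unfold closed_form.
  change (2 * 0 + 4)%nat with (0 + 2 + 2)%nat. change (2 * 0 + 2)%nat with (0 + 2)%nat. change (2 * 0)%nat with 0%nat.
  rewrite (wp_add2 (0 + 2)), (wp_add2 0), wp_0. simpl. field.
Qed.

Lemma closed_form_S (r : nat) :
  closed_form (S r) = tel_factor (INR r) / 4 * closed_form r + / 4 * boundary_limit r.
Proof.
  unfold closed_form, boundary_limit.
  replace (2 * S r + 4)%nat with (2 * r + 2 + 2 + 2)%nat by lia.
  replace (2 * S r + 2)%nat with (2 * r + 2 + 2)%nat by lia.
  replace (2 * S r)%nat with (2 * r + 2)%nat by lia.
  replace (2 * r + 4)%nat with (2 * r + 2 + 2)%nat by lia.
  rewrite (wp_add2 (2 * r + 2 + 2)), (wp_add2 (2 * r + 2)), (wp_add2 (2 * r)).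
  rewrite (pow_add 2 (2 * r + 2) 2).
  assert (Hp : 2 ^ (2 * r + 2) <> 0) by (apply pow_nonzero; lra).
  pose proof (pos_INR r). pose proof (tel_quad_gt0 (INR r) ltac:(lra)).
  rewrite !plus_INR, !mult_INR, !S_INR. simpl INR.
  unfold tel_factor, tel_quad in *. field. repeat split; try lra; nra.
Qed.

Theorem theorem5p0p2 (r : nat) :
  is_series (fun k : nat => summand r (S k))
    (/ 2 ^ (2 * r + 2)%nat *
      ((8 * wp (2 * r + 4)%nat - 8 * wp (2 * r + 2)%nat + 3 * wp (2 * r)%nat) / 128
       + 6 / (128 * (4 + 2 * INR r)) - 3 / (128 * (2 + 2 * INR r)))).
Proof.
  change (is_series (fun k => summand r (S k)) (closed_form r)).
  induction r as [|r IH].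
  - rewrite closed_form_0. exact is_series_summand_0.
  - rewrite closed_form_S. exact (is_series_summand_S r _ IH).
Qed.
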